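(* For any $d\geq 4$, there is no maximally $\psi$-epistemic ontological model that reproduces the quantum predictions for a quantum system with Hilbert space $\mathbb{C}^d$.
   Context: An ontological model for a quantum system with Hilbert space $\mathbb{C}^d$ consists of: a measure space $\Lambda$ of ''ontic states'' (with measure $\mathrm{d}\lambda$); for every pure state $\ket{\psi}$, a probability density $\mu_\psi$ on $\Lambda$; and for every projective measurement $M$ with outcomes $f$ (corresponding to orthogonal projectors $P_f$ summing to the identity), response functions $\xi_M(f|\lambda)\geq 0$ with $\sum_f \xi_M(f|\lambda)=1$ for all $\lambda$. The model reproduces the quantum predictions if $\int_\Lambda \xi_M(f|\lambda)\mu_\psi(\lambda)\,\mathrm{d}\lambda = \bra{\psi}P_f\ket{\psi}$ for all pure states $\ket{\psi}$, all projective measurements $M$ and outcomes $f$. The classical overlap of densities $p,q$ is $\omega_C(p,q)=\int\min\{p(x),q(x)\}\,\mathrm{d}x$; the quantum overlap of pure states is $\omega_Q(\psi,\phi)=1-\sqrt{1-|\braket{\psi|\phi}|^2}$. The model is maximally $\psi$-epistemic if $\omega_C(\mu_\psi,\mu_\phi)=\omega_Q(\psi,\phi)$ for all pairs of pure states $\ket{\psi},\ket{\phi}$. *)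

From HB Require Import structures.
From mathcomp Require Import all_boot all_order all_algebra.
From mathcomp Require Import all_classical all_reals all_analysis.
From mathcomp Require Import complex.
Set Implicit Arguments. Unset Strict Implicit. Unset Printing Implicit Defensive.
Import Order.TTheory GRing.Theory Num.Theory.
Local Open Scope ring_scope.
Local Open Scope classical_set_scope.

Definition inner (R : realType) (n : nat) (u v : 'cV[complex R]_n) : complex R :=
  \sum_(i < n) (u i 0)^* * v i 0.

Definition adjmx (R : realType) (n : nat) (A : 'M[complex R]_n) : 'M[complex R]_n :=
  (map_mx Num.conj A)^T.

Definition pure_state (R : realType) (n : nat) (psi : 'cV[complex R]_n) : Prop :=
  inner psi psi = 1.

Record meas (R : realType) (n : nat) := Meas {
  meas_k : nat;
  meas_P : 'I_meas_k -> 'M[complex R]_n }.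
Arguments meas_k {R n} m.
Arguments meas_P {R n} m f.

Definition is_projective_meas (R : realType) (n : nat) (M : meas R n) : Prop :=
  (forall f, adjmx (meas_P M f) = meas_P M f) /\
  (forall f, meas_P M f *m meas_P M f = meas_P M f) /\
  (forall f, meas_P M f != 0) /\
  (forall f g, f != g -> meas_P M f *m meas_P M g = 0) /\
  (\sum_f meas_P M f = 1%:M).

Local Open Scope ereal_scope.

(* Ontological model data: a measure space (Lam, mu), densities mu_psi
   (one for every pure state psi), and response functions xi_M(f|lambda)
   (for every projective measurement M and outcome f). *)
Definition ontological_model (R : realType) (n : nat)
  (dsp : measure_display) (Lam : measurableType dsp)
  (mu : {measure set Lam -> \bar R})
  (dens : 'cV[complex R]_n -> Lam -> R)
  (xi : forall M : meas R n, 'I_(meas_k M) -> Lam -> R) : Prop :=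
  (forall psi, pure_state psi ->
     measurable_fun setT (dens psi) /\
     (forall l, (0 <= dens psi l)%R) /\
     \int[mu]_l (dens psi l)%:E = 1) /\
  (forall M, is_projective_meas M ->
     (forall f, measurable_fun setT (xi M f)) /\
     (forall f l, (0 <= xi M f l)%R) /\
     (forall l, (\sum_f xi M f l)%R = 1%R)).

Definition reproduces_qm (R : realType) (n : nat)
  (dsp : measure_display) (Lam : measurableType dsp)
  (mu : {measure set Lam -> \bar R})
  (dens : 'cV[complex R]_n -> Lam -> R)
  (xi : forall M : meas R n, 'I_(meas_k M) -> Lam -> R) : Prop :=
  forall psi M, pure_state psi -> is_projective_meas M ->
    forall f, \int[mu]_l (xi M f l * dens psi l)%:E
              = (complex.Re (inner psi (meas_P M f *m psi)))%:E.

Definition omega_C (R : realType) (dsp : measure_display) (Lam : measurableType dsp)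
  (mu : {measure set Lam -> \bar R}) (p q : Lam -> R) : \bar R :=
  \int[mu]_l (Num.min (p l) (q l))%:E.

Definition omega_Q (R : realType) (n : nat) (psi phi : 'cV[complex R]_n) : R :=
  (1 - Num.sqrt (1 - (ComplexField.Normc.normc (inner psi phi)) ^+ 2))%R.

Definition max_psi_epistemic (R : realType) (n : nat)
  (dsp : measure_display) (Lam : measurableType dsp)
  (mu : {measure set Lam -> \bar R})
  (dens : 'cV[complex R]_n -> Lam -> R) : Prop :=
  forall psi phi, pure_state psi -> pure_state phi ->
    omega_C mu (dens psi) (dens phi) = (omega_Q psi phi)%:E.

From HB Require Import structures.
From mathcomp Require Import all_boot all_order all_algebra.
From mathcomp Require Import all_classical all_reals all_analysis.
From mathcomp Require Import complex.
From mathcomp Require Import measurable_realfun ring lra.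
Set Implicit Arguments. Unset Strict Implicit. Unset Printing Implicit Defensive.
Import Order.TTheory GRing.Theory Num.Theory.
Local Open Scope ring_scope.
Local Open Scope classical_set_scope.

(* Take psi = e_0 and the eight states phi_s = (e_0 + sum_k (-1)^(s_k) e_(k+1)) / 2,
   s in {0,1}^3, all with |<psi|phi_s>| = 1/2.  Maximal psi-epistemicity makes
   each overlap omega_C(mu_psi, mu_phi_s) equal to 1 - sqrt(3/4) > 1/8.  But if
   s and t differ in coordinate k, the measurement {P_(e_0+e_(k+1)),
   P_(e_0-e_(k+1)), rest} has, for each of phi_s, phi_t and e_0, an outcome of
   probability 0; reproducing the Born rule, the three densities then share no
   mass.  So the eight overlaps are essentially disjoint parts of mu_psi and sum
   to at most 1, a contradiction. *)

Section RankOneProjectors.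
Variables (R : realType) (n : nat).
Local Notation C := (complex R).
Implicit Types (u v w : 'cV[C]_n) (A B : 'M[C]_n).

Lemma innerC u v : inner v u = (inner u v)^*.
Proof.
rewrite /inner rmorph_sum; apply: eq_bigr => i _.
by rewrite rmorphM /= conjCK mulrC.
Qed.

Lemma innerDl u v w : inner (u + v) w = inner u w + inner v w.
Proof.
by rewrite /inner -big_split; apply: eq_bigr => i _; rewrite mxE rmorphD mulrDl.
Qed.

Lemma innerBl u v w : inner (u - v) w = inner u w - inner v w.
Proof.
by rewrite /inner -sumrB; apply: eq_bigr => i _; rewrite !mxE rmorphB mulrBl.
Qed.

Lemma innerDr u v w : inner u (v + w) = inner u v + inner u w.
Proof. by rewrite /inner -big_split; apply: eq_bigr => i _; rewrite mxE mulrDr. Qed.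

Lemma innerBr u v w : inner u (v - w) = inner u v - inner u w.
Proof. by rewrite /inner -sumrB; apply: eq_bigr => i _; rewrite !mxE mulrBr. Qed.

Lemma innerZr u v c : inner u (c *: v) = c * inner u v.
Proof. by rewrite /inner mulr_sumr; apply: eq_bigr => i _; rewrite mxE mulrCA. Qed.

Lemma innerZl u v c : inner (c *: u) v = c^* * inner u v.
Proof. by rewrite /inner mulr_sumr; apply: eq_bigr => i _; rewrite mxE rmorphM mulrA. Qed.

Lemma inner0l v : inner 0 v = 0.
Proof. by rewrite /inner big1 // => i _; rewrite mxE rmorph0 mul0r. Qed.

Definition dual u : 'rV[C]_n := (map_mx Num.conj u)^T.

Lemma dual_mul u v : dual u *m v = (inner u v)%:M.
Proof.
by apply/matrixP => i j; rewrite !ord1 !mxE /inner; apply: eq_bigr => k _; rewrite !mxE.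
Qed.

Definition proj_line u : 'M[C]_n := (inner u u)^-1 *: (u *m dual u).

Lemma proj_line_mul_vec u v :
  proj_line u *m v = (inner u v / inner u u) *: u.
Proof. by rewrite -scalemxAl -mulmxA dual_mul mul_mx_scalar scalerA mulrC. Qed.

Lemma proj_line_mul u w :
  proj_line u *m proj_line w = (inner u w / inner u u / inner w w) *: (u *m dual w).
Proof.
rewrite [proj_line w in LHS]/proj_line -scalemxAr mulmxA proj_line_mul_vec.
by rewrite -scalemxAl scalerA mulrC.
Qed.

Lemma proj_line_idem u : inner u u != 0 -> proj_line u *m proj_line u = proj_line u.
Proof. by move=> u0; rewrite proj_line_mul mulfV // mul1r. Qed.

Lemma proj_line_orth u w : inner u w = 0 -> proj_line u *m proj_line w = 0.
Proof. by move=> uw; rewrite proj_line_mul uw !mul0r scale0r. Qed.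

Lemma proj_line_fix u : inner u u != 0 -> proj_line u *m u = u.
Proof. by move=> u0; rewrite proj_line_mul_vec mulfV // scale1r. Qed.

Lemma inner_proj_line u v :
  inner v (proj_line u *m v) = inner u v * inner v u / inner u u.
Proof. by rewrite proj_line_mul_vec innerZr mulrAC. Qed.

Lemma adjmxB A B : adjmx (A - B) = adjmx A - adjmx B.
Proof. by apply/matrixP => i j; rewrite /adjmx !mxE rmorphB. Qed.

Lemma adjmx1 : adjmx (1%:M : 'M[C]_n) = 1%:M.
Proof. by apply/matrixP => i j; rewrite /adjmx !mxE rmorphMn rmorph1 eq_sym. Qed.

Lemma adjmx_proj_line u : adjmx (proj_line u) = proj_line u.
Proof.
have uu : (inner u u)^* = inner u u by rewrite -innerC.
apply/matrixP => i j; rewrite /adjmx !mxE !big_ord1 !mxE.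
by rewrite rmorphM fmorphV /= uu rmorphM /= conjCK [_ * u i _]mulrC.
Qed.

End RankOneProjectors.

Section ComplementProjector.
Variables (Rg : pzRingType) (m : nat) (P Q : 'M[Rg]_m).
Hypotheses (PP : P *m P = P) (QQ : Q *m Q = Q) (PQ : P *m Q = 0) (QP : Q *m P = 0).

Lemma mulP_compl : P *m (1%:M - P - Q) = 0.
Proof. by rewrite 2!mulmxBr mulmx1 PP PQ subrr subr0. Qed.

Lemma mulQ_compl : Q *m (1%:M - P - Q) = 0.
Proof. by rewrite 2!mulmxBr mulmx1 QP QQ subr0 subrr. Qed.

Lemma mul_complP : (1%:M - P - Q) *m P = 0.
Proof. by rewrite 2!mulmxBl mul1mx PP QP subrr subr0. Qed.

Lemma mul_complQ : (1%:M - P - Q) *m Q = 0.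
Proof. by rewrite 2!mulmxBl mul1mx PQ QQ subr0 subrr. Qed.

Lemma compl_idem : (1%:M - P - Q) *m (1%:M - P - Q) = 1%:M - P - Q.
Proof. by rewrite 2!mulmxBl mul1mx mulP_compl mulQ_compl !subr0. Qed.

End ComplementProjector.

Section ThreeOutcomeMeasurement.
Variables (R : realType) (n : nat).
Local Notation C := (complex R).
Implicit Types (u v w z : 'cV[C]_n).

Definition three_meas_P u w (f : 'I_3) : 'M[C]_n :=
  match val f with
  | 0 => proj_line u
  | 1 => proj_line w
  | _ => 1%:M - proj_line u - proj_line w
  end.

Definition three_meas u w : meas R n := Meas (three_meas_P u w).

Lemma inner_three_meas_last u w v (f : 'I_3) : val f = 2 ->
  inner v (three_meas_P u w f *m v) =
  inner v v - inner u v * inner v u / inner u u - inner w v * inner v w / inner w w.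
Proof.
by rewrite /three_meas_P => ->; rewrite 2!mulmxBl mul1mx 2!innerBr !inner_proj_line.
Qed.

Lemma neq0_of_inner_self u : inner u u != 0 -> u != 0.
Proof. by apply: contraNneq => ->; rewrite inner0l. Qed.

Lemma mx_neq0_of_fixed (A : 'M[C]_n) z : z != 0 -> A *m z = z -> A != 0.
Proof. by move=> z0 Az; apply: contra_neq z0 => A0; rewrite -Az A0 mul0mx. Qed.

Lemma three_meas_projective u w z :
  inner u u != 0 -> inner w w != 0 -> inner u w = 0 ->
  inner u z = 0 -> inner w z = 0 -> z != 0 ->
  is_projective_meas (three_meas u w).
Proof.
move=> uu0 ww0 uw uz wz z0.
have wu : inner w u = 0 by rewrite innerC uw rmorph0.
have Pu := proj_line_idem uu0; have Pw := proj_line_idem ww0.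
have Puw := proj_line_orth uw; have Pwu := proj_line_orth wu.
split; [|split; [|split; [|split]]] => /=.
- case=> -[|[|[|//]]] ?; rewrite /three_meas_P /=; [exact: adjmx_proj_line..|].
  by rewrite 2!adjmxB adjmx1 !adjmx_proj_line.
- case=> -[|[|[|//]]] ?; rewrite /three_meas_P /=; [exact: Pu | exact: Pw |].
  exact: compl_idem Pu Pw Puw Pwu.
- case=> -[|[|[|//]]] ?; rewrite /three_meas_P /=.
  + exact/(mx_neq0_of_fixed (neq0_of_inner_self uu0))/proj_line_fix.
  + exact/(mx_neq0_of_fixed (neq0_of_inner_self ww0))/proj_line_fix.
  + apply: (mx_neq0_of_fixed z0).
    by rewrite 2!mulmxBl mul1mx !proj_line_mul_vec uz wz !mul0r !scale0r !subr0.
- case=> -[|[|[|//]]] ? [] -[|[|[|//]]] ? /= fg; rewrite /three_meas_P /=;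
  [discriminate fg | exact: Puw | exact: mulP_compl Pu Puw | exact: Pwu
  | discriminate fg | exact: mulQ_compl Pw Pwu | exact: mul_complP Pu Pwu
  | exact: mul_complQ Pw Puw | discriminate fg].
- rewrite (big_ord_recl 2) !big_ord_recl big_ord0 /three_meas_P /=.
  by rewrite addr0 addrA -[1%:M - _ - _]addrA -opprD addrC subrK.
Qed.

End ThreeOutcomeMeasurement.

Section Antidistinguishability.
Variables (R : realType) (n : nat) (dsp : measure_display) (Lam : measurableType dsp)
  (mu : {measure set Lam -> \bar R}) (dens : 'cV[complex R]_n -> Lam -> R)
  (xi : forall M : meas R n, 'I_(meas_k M) -> Lam -> R).
Hypotheses (model : ontological_model mu dens xi) (born : reproduces_qm mu dens xi).
Local Open Scope ereal_scope.

(* Each xi_M(f|.) * g is dominated by xi_M(f|.) * mu_x for a state x giving f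
   probability 0, so it integrates to 0; these products add up to g. *)
Lemma antidistinguishable_common_null (M : meas R n) (g : Lam -> R) :
  is_projective_meas M -> measurable_fun setT g -> (forall l, 0 <= g l)%R ->
  (forall f, exists2 x, pure_state x &
     inner x (meas_P M f *m x) = 0%R /\ forall l, (g l <= dens x l)%R) ->
  \int[mu]_l (g l)%:E = 0.
Proof.
move=> hM mg g0 antidist.
have [mxi [xi0 xi1]] := model.2 M hM.
have mxig (f : 'I_(meas_k M)) : measurable_fun setT (fun l => (xi f l * g l)%R).
  exact: measurable_funM.
have -> : \int[mu]_l (g l)%:E = \int[mu]_l (\sum_(f < meas_k M) (xi f l * g l)%:E).
  by apply: eq_integral => l _; rewrite sumEFin -mulr_suml xi1 mul1r.
rewrite ge0_integral_sum //; first last.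
- by move=> f l _; rewrite lee_fin mulr_ge0.
- by move=> f; apply/measurable_EFinP.
apply: big1 => f _.
have [x px [born0 gx]] := antidist f.
have [mdx [dx0 _]] := model.1 x px.
apply/eqP; rewrite eq_le integral_ge0 ?andbT; last by move=> l _; rewrite lee_fin mulr_ge0.
rewrite -[X in _ <= X]/((complex.Re 0%R)%:E) -born0 -born //.
apply: ge0_le_integral => //.
- by move=> l _; rewrite lee_fin mulr_ge0.
- exact/measurable_EFinP.
- exact/measurable_EFinP/measurable_funM.
- by move=> l _; rewrite lee_fin ler_wpM2l.
Qed.

Lemma three_meas_common_null (u w x0 x1 y : 'cV[complex R]_n) (g : Lam -> R) :
  is_projective_meas (three_meas u w) ->
  pure_state x0 -> pure_state x1 -> pure_state y ->
  inner u x0 = 0%R -> inner w x1 = 0%R ->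
  (inner u y * inner y u / inner u u + inner w y * inner y w / inner w w = 1)%R ->
  measurable_fun setT g -> (forall l, 0 <= g l)%R ->
  (forall l, g l <= dens x0 l)%R -> (forall l, g l <= dens x1 l)%R ->
  (forall l, g l <= dens y l)%R ->
  \int[mu]_l (g l)%:E = 0.
Proof.
move=> hM px0 px1 py ux0 wx1 y_span mg g0 gx0 gx1 gy.
apply: (antidistinguishable_common_null hM) => // -[[|[|[|//]]] hf].
- by exists x0 => //=; rewrite /three_meas_P /= inner_proj_line ux0 !mul0r.
- by exists x1 => //=; rewrite /three_meas_P /= inner_proj_line wx1 !mul0r.
- exists y => //=; split => //.
  by rewrite inner_three_meas_last // py -addrA -opprD y_span subrr.
Qed.

End Antidistinguishability.

Lemma sum_le_bound_add_pairwise_min (R : realDomainType) (S : finType) (s0 : S)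
    (a : R) (c : S -> R) :
  (forall s, 0 <= c s) -> (forall s, c s <= a) ->
  \sum_s c s <= a + \sum_s \sum_t (if t == s then 0 else Num.min (c s) (c t)).
Proof.
move=> c0 ca.
have [j _ cj] := @arg_maxP _ _ _ s0 xpredT c erefl.
have min0 s t : 0 <= (if t == s then 0 else Num.min (c s) (c t)).
  by case: (t == s); rewrite // le_min !c0.
rewrite (bigD1 j) //= [X in _ <= _ + X](bigD1 j) //= addrA.
apply: lerD; first by rewrite (le_trans (ca j)) // lerDl sumr_ge0.
apply: ler_sum => s sj; rewrite (bigD1 j) //= eq_sym (negbTE sj).
by rewrite (min_l (cj s isT)) lerDl sumr_ge0.
Qed.

Section OverlapBound.
Variables (d : measure_display) (T : measurableType d) (R : realType)
  (mu : {measure set T -> \bar R}).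
Local Open Scope ereal_scope.

Lemma sum_overlaps_le (S : finType) (s0 : S) (p : T -> R) (q : S -> T -> R) :
  measurable_fun setT p -> (forall x, 0 <= p x)%R ->
  (forall s, measurable_fun setT (q s)) -> (forall s x, 0 <= q s x)%R ->
  (forall s t, s != t ->
     \int[mu]_x (Num.min (Num.min (p x) (q s x)) (Num.min (p x) (q t x)))%:E = 0) ->
  \sum_s \int[mu]_x (Num.min (p x) (q s x))%:E <= \int[mu]_x (p x)%:E.
Proof.
move=> mp p0 mq q0 triple0.
pose c s x := Num.min (p x) (q s x).
pose H s t x := if t == s then 0%R else Num.min (c s x) (c t x).
have mc s : measurable_fun setT (c s) by exact: measurable_minr.
have c0 s x : (0 <= c s x)%R by rewrite le_min p0 q0.
have mH s t : measurable_fun setT (H s t).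
  by rewrite /H; case: (t == s); [exact: measurable_cst | exact: measurable_minr].
have H0 s t x : (0 <= H s t x)%R by rewrite /H; case: (t == s); rewrite // le_min !c0.
have HE s t x : (0 <= (H s t x)%:E) by rewrite lee_fin.
have mHE s t : measurable_fun setT (fun x => (H s t x)%:E) by exact/measurable_EFinP.
have intH s t : \int[mu]_x (H s t x)%:E = 0.
  rewrite /H; case: eqVneq => [_|ts]; first by rewrite integral0.
  by apply: triple0; rewrite eq_sym.
rewrite -ge0_integral_sum //; first last.
- by move=> s x _; rewrite lee_fin le_min p0 q0.
- by move=> s; exact/measurable_EFinP/measurable_minr.
apply: (@le_trans _ _ (\int[mu]_x ((p x)%:E + \sum_s \sum_t (H s t x)%:E))).
  apply: ge0_le_integral => //.
  - by move=> x _; apply: sume_ge0 => s _; rewrite lee_fin le_min p0 q0.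
  - by apply: emeasurable_sum => s; exact/measurable_EFinP/measurable_minr.
  - by apply: emeasurable_funD; [exact/measurable_EFinP | do 2 apply: emeasurable_sum => ?].
  - move=> x _; rewrite sumEFin (eq_bigr (fun s => (\sum_t H s t x)%:E)); last first.
      by move=> s _; rewrite sumEFin.
    rewrite sumEFin -EFinD lee_fin.
    by apply: (sum_le_bound_add_pairwise_min s0 (c := c^~ x)) => // s; rewrite ge_min lexx.
rewrite ge0_integralD //; first last.
- by do 2 apply: emeasurable_sum => ?.
- by move=> x _; do 2 apply: sume_ge0 => ? _.
- exact/measurable_EFinP.
- by move=> x _; rewrite lee_fin.
rewrite ge0_integral_sum //; first last.
- by move=> s x _; apply: sume_ge0.
- by move=> s; apply: emeasurable_sum.
rewrite big1 ?adde0 // => s _.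
by rewrite ge0_integral_sum // big1.
Qed.

End OverlapBound.

Section SignStates.
Variables (R : realType) (n : nat).
Hypothesis n_ge4 : (4 <= n)%N.
Local Notation C := (complex R).

Lemma ltn_small i : (i < 4)%N -> (i < n)%N.
Proof. by move/leq_trans; apply. Qed.

Definition vec (f : nat -> C) : 'cV[C]_n := \col_i f i.

Definition basis_vec (i : nat) : 'cV[C]_n := vec (fun j => (j == i)%:R).

Lemma inner_vec_widen m (f g : nat -> C) : (m <= n)%N ->
  (forall i, (m <= i)%N -> f i = 0) ->
  inner (vec f) (vec g) = \sum_(i < m) (f i)^* * g i.
Proof.
move=> mn f0; rewrite (big_ord_widen _ (fun i => (f i)^* * g i) mn) big_mkcond /=.
by apply: eq_bigr => i _; rewrite !mxE; case: ltnP => // /f0 ->; rewrite rmorph0 mul0r.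
Qed.

Lemma inner_basis_vec i (g : nat -> C) : (i < n)%N -> inner (basis_vec i) (vec g) = g i.
Proof.
move=> lt_in; rewrite /inner (bigD1 (Ordinal lt_in)) //= big1 ?addr0.
  by rewrite !mxE eqxx rmorph1 mul1r.
by move=> j ji; rewrite !mxE (negbTE (ji : val j != i)) rmorph0 mul0r.
Qed.

Lemma inner_basis_vecs i j : (i < n)%N -> inner (basis_vec i) (basis_vec j) = (i == j)%:R.
Proof. by move=> lt_in; rewrite inner_basis_vec // eq_sym. Qed.

Definition sgn (b : bool) : C := (-1) ^+ b.

Lemma sgn_conj_mul b : (sgn b)^* * sgn b = 1.
Proof. by rewrite /sgn rmorph_sign -signr_addb addbb. Qed.

Definition sign_coord (s : {ffun 'I_3 -> bool}) (j : nat) : C :=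
  match j with 0 => 1 | k.+1 => if (k < 3)%N then sgn (s (inord k)) else 0 end.

Definition sign_state s : 'cV[C]_n := 2^-1 *: vec (sign_coord s).

Lemma pure_basis_vec0 : pure_state (basis_vec 0).
Proof. by rewrite /pure_state inner_basis_vecs // ltn_small. Qed.

Lemma pure_sign_state s : pure_state (sign_state s).
Proof.
rewrite /pure_state innerZl innerZr (inner_vec_widen _ n_ge4); last first.
  by case=> [|k] // k3; rewrite /= ltnNge -ltnS k3.
rewrite (big_ord_recl 3) !big_ord_recl big_ord0 /= !sgn_conj_mul rmorph1 fmorphV rmorph_nat.
by field.
Qed.

Lemma inner_basis_vec0_sign_state s : inner (basis_vec 0) (sign_state s) = 2^-1.
Proof. by rewrite innerZr inner_basis_vec ?mulr1 // ltn_small. Qed.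

Lemma succ_lt (k : 'I_3) : (k.+1 < n)%N.
Proof. exact: ltn_small (ltn_ord k : (k.+1 < 4)%N). Qed.

Definition plus_vec (k : 'I_3) : 'cV[C]_n := basis_vec 0 + basis_vec k.+1.
Definition minus_vec (k : 'I_3) : 'cV[C]_n := basis_vec 0 - basis_vec k.+1.

Lemma sign_coord_succ s (k : 'I_3) : sign_coord s k.+1 = sgn (s k).
Proof. by rewrite /= ltn_ord inord_val. Qed.

Lemma inner_plus_vec_sign_state s k :
  inner (plus_vec k) (sign_state s) = 2^-1 * (1 + sgn (s k)).
Proof.
by rewrite innerZr innerDl !inner_basis_vec ?succ_lt ?(ltn_small (i := 0)) // sign_coord_succ.
Qed.

Lemma inner_minus_vec_sign_state s k :
  inner (minus_vec k) (sign_state s) = 2^-1 * (1 - sgn (s k)).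
Proof.
by rewrite innerZr innerBl !inner_basis_vec ?succ_lt ?(ltn_small (i := 0)) // sign_coord_succ.
Qed.

Ltac basis_inner :=
  rewrite ?(innerBl, innerBr, innerDl, innerDr) !inner_basis_vecs ?succ_lt;
  try (by apply: ltn_small);
  rewrite /= ?eqxx ?mulr1n ?mulr0n.

Lemma inner_plus_vec_self k : inner (plus_vec k) (plus_vec k) = 2.
Proof. rewrite /plus_vec; basis_inner; ring. Qed.

Lemma inner_minus_vec_self k : inner (minus_vec k) (minus_vec k) = 2.
Proof. rewrite /minus_vec; basis_inner; ring. Qed.

Lemma inner_plus_minus_vec k : inner (plus_vec k) (minus_vec k) = 0.
Proof. rewrite /plus_vec /minus_vec; basis_inner; ring. Qed.

Lemma sign_meas_projective k :
  is_projective_meas (three_meas (plus_vec k) (minus_vec k)).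
Proof.
pose j := if k == 0 :> nat then 2%N else 1%N.
have lt_jn : (j < n)%N by apply: ltn_small; rewrite /j; case: ifP.
apply: (three_meas_projective (z := basis_vec j)).
- by rewrite inner_plus_vec_self pnatr_eq0.
- by rewrite inner_minus_vec_self pnatr_eq0.
- exact: inner_plus_minus_vec.
- rewrite /plus_vec /j; clear lt_jn j.
  by case: k => -[|[|[|//]]] ?; basis_inner; try ring.
- rewrite /minus_vec /j; clear lt_jn j.
  by case: k => -[|[|[|//]]] ?; basis_inner; try ring.
- apply/eqP => /matrixP/(_ (Ordinal lt_jn) 0).
  by rewrite !mxE eqxx => /eqP; rewrite oner_eq0.
Qed.

Lemma basis_vec0_in_span k :
  inner (plus_vec k) (basis_vec 0) * inner (basis_vec 0) (plus_vec k)
    / inner (plus_vec k) (plus_vec k)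
  + inner (minus_vec k) (basis_vec 0) * inner (basis_vec 0) (minus_vec k)
    / inner (minus_vec k) (minus_vec k) = 1.
Proof.
rewrite inner_plus_vec_self inner_minus_vec_self /plus_vec /minus_vec.
by basis_inner; field.
Qed.

End SignStates.

Arguments basis_vec {R n}.
Arguments sign_state {R n}.
Arguments plus_vec {R n}.
Arguments minus_vec {R n}.

Lemma normc_half (R : realType) : ComplexField.Normc.normc (2^-1 : complex R) = 2^-1.
Proof.
have -> : (2^-1 : complex R) = (2^-1 : R)%:C%C by rewrite fmorphV rmorph_nat.
by rewrite /ComplexField.Normc.normc /= expr0n /= addr0 sqrtr_sqr ger0_norm.
Qed.

Lemma eight_overlaps_gt1 (R : realType) : 1 < (1 - Num.sqrt (1 - (2^-1 : R) ^+ 2)) *+ 8.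
Proof.
have : Num.sqrt (1 - (2^-1 : R) ^+ 2) < 7 / 8.
  rewrite -[X in _ < X]ger0_norm // -sqrtr_sqr ltr_sqrt; last by rewrite exprn_gt0.
  lra.
lra.
Qed.

Section SignStatesModel.
Variables (R : realType) (n : nat) (dsp : measure_display) (Lam : measurableType dsp)
  (mu : {measure set Lam -> \bar R}) (dens : 'cV[complex R]_n -> Lam -> R)
  (xi : forall M : meas R n, 'I_(meas_k M) -> Lam -> R).
Hypothesis n_ge4 : (4 <= n)%N.
Hypotheses (model : ontological_model mu dens xi) (born : reproduces_qm mu dens xi).

Let overlap3 (s t : {ffun 'I_3 -> bool}) (l : Lam) :=
  Num.min (Num.min (dens (basis_vec 0) l) (dens (sign_state s) l))
          (Num.min (dens (basis_vec 0) l) (dens (sign_state t) l)).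

Lemma sign_states_common_null_oriented (s t : {ffun 'I_3 -> bool}) (k : 'I_3) : s k -> ~~ t k ->
  (\int[mu]_l (overlap3 s t l)%:E = 0)%E.
Proof.
move=> sk tk.
have [mp [p0 _]] := model.1 _ (pure_basis_vec0 R n_ge4).
have [ms [s0 _]] := model.1 _ (pure_sign_state R n_ge4 s).
have [mt [t0 _]] := model.1 _ (pure_sign_state R n_ge4 t).
apply: (three_meas_common_null model born (sign_meas_projective R n_ge4 k)
  (pure_sign_state R n_ge4 s) (pure_sign_state R n_ge4 t) (pure_basis_vec0 R n_ge4)).
- by rewrite (inner_plus_vec_sign_state R n_ge4) sk /sgn expr1 subrr mulr0.
- by rewrite (inner_minus_vec_sign_state R n_ge4) (negbTE tk) /sgn expr0 subrr mulr0.
- exact (basis_vec0_in_span R n_ge4 k).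
- by apply: measurable_minr; apply: measurable_minr.
- by move=> l; rewrite !le_min p0 s0 t0.
- by move=> l; rewrite !ge_min lexx orbT.
- by move=> l; rewrite !ge_min lexx !orbT.
- by move=> l; rewrite !ge_min lexx.
Qed.

Lemma sign_states_common_null (s t : {ffun 'I_3 -> bool}) : s != t ->
  (\int[mu]_l (overlap3 s t l)%:E = 0)%E.
Proof.
move=> st; have [k skt] : exists k, s k != t k.
  apply/existsP; apply: contraNT st => /existsPn eqst.
  by apply/eqP/ffunP => k; apply/eqP/negPn/eqst.
wlog sk : s t st skt / s k.
  move=> oriented; case/boolP: (s k) => [|sk]; first exact: oriented.
  have tk : t k by move: skt; rewrite (negbTE sk); case: (t k).
  rewrite -(oriented t s _ _ tk); last 2 first.
  - by rewrite eq_sym.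
  - by rewrite eq_sym.
  by apply: eq_integral => l _; rewrite /overlap3 minC.
have tk : ~~ t k by move: skt; rewrite sk; case: (t k).
exact: sign_states_common_null_oriented sk tk.
Qed.

End SignStatesModel.

Theorem corollary1 (R : realType) (n : nat) (hn : (4 <= n)%N)
  (dsp : measure_display) (Lam : measurableType dsp)
  (mu : {measure set Lam -> \bar R})
  (dens : 'cV[complex R]_n -> Lam -> R)
  (xi : forall M : meas R n, 'I_(meas_k M) -> Lam -> R) :
  ~ (ontological_model mu dens xi /\ reproduces_qm mu dens xi /\
     max_psi_epistemic mu dens).
Proof.
move=> [model [born max_epistemic]].
have [mp [p0 p1]] := model.1 _ (pure_basis_vec0 R hn).
have mq s := (model.1 _ (pure_sign_state R hn s)).1.
have q0 s := (model.1 _ (pure_sign_state R hn s)).2.1.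
have := sum_overlaps_le [ffun=> true] mp p0 mq q0
  (sign_states_common_null hn model born).
rewrite p1 (eq_bigr (fun=> (1 - Num.sqrt (1 - 2^-1 ^+ 2))%:E)); last first.
  move=> s _; rewrite [LHS](max_epistemic _ _ (pure_basis_vec0 R hn) (pure_sign_state R hn s)).
  by rewrite /omega_Q (inner_basis_vec0_sign_state R hn) normc_half.
rewrite sumEFin sumr_const card_ffun card_bool card_ord lee_fin => le_overlaps.
by have := lt_le_trans (eight_overlaps_gt1 R) le_overlaps; rewrite ltxx.
Qed.
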